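(* Let $R$ be a domain and let $G$ be a finite undirected graph without loops with vertex set $A=\{a_1,\dots,a_n\}$, $n\geqslant 2$, such that the complement graph $\overline{G}$ is connected. Suppose the partially commutative metabelian Lie algebra $\mathcal{M}(A;G)=L_1\oplus L_2$ is a direct sum of two subalgebras such that for every $i\in\{1,\dots,n\}$ we have $(a_i)_1=a_i+g_i$ and $(a_i)_2=-g_i$ with $g_i\in\mathcal{M}(A;G)$ and $a_i\notin\mathrm{supp}(\omega_1(g_i))$. Then $g_i=0$ for all $i\in\{1,\dots,n\}$.
   Context: All Lie algebras are over the domain $R$. The complement graph $\overline{G}$ has vertex set $A$, with distinct vertices adjacent iff they are not adjacent in $G$. $\mathcal{M}(A;G)$ is the Lie $R$-algebra presented in the variety of metabelian Lie algebras (identity $[[x,y],[z,t]]=0$) by generators $A$ and relations $[a_p,a_q]=0$ for all edges $\{a_p,a_q\}$ of $G$. Since relations and identities are multi-homogeneous, every element $h$ is uniquely a sum of nonzero multi-homogeneous components (multi-degree of a Lie monomial = vector counting occurrences of each $a_p$). $\mathrm{supp}(h)$ is the set of $a_p$ occurring with nonzero exponent in the multi-degree of some component of $h$; $\omega_1(h)$ is the sum of the components of length $1$. A direct sum $L=L_1\oplus L_2$ of subalgebras means $L_1,L_2$ are subalgebras, $L=L_1\oplus L_2$ as $R$-modules and $[L_1,L_2]=0$; for $h\in L$, $(h)_1\in L_1$, $(h)_2\in L_2$ are the unique elements with $h=(h)_1+(h)_2$. *)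

From HB Require Import structures.
From mathcomp Require Import all_boot all_order all_algebra.
Set Implicit Arguments. Unset Strict Implicit. Unset Printing Implicit Defensive.
Import GRing.Theory.
Local Open Scope ring_scope.

Definition simple_graph (n : nat) (e : rel 'I_n) : Prop :=
  (forall i, ~~ e i i) /\ (forall i j, e i j = e j i).

Definition compl_graph (n : nat) (e : rel 'I_n) : rel 'I_n :=
  fun i j => (i != j) && ~~ e i j.

Definition compl_connected (n : nat) (e : rel 'I_n) : Prop :=
  forall i j : 'I_n, connect (compl_graph e) i j.

Definition bilinear_br (R : pzRingType) (V : lmodType R) (br : V -> V -> V) :=
  (forall (c : R) x y z, br (c *: x + y) z = c *: br x z + br y z) /\
  (forall (c : R) x y z, br z (c *: x + y) = c *: br z x + br z y).

Definition metabelian_lie (R : pzRingType) (V : lmodType R) (br : V -> V -> V) :=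
  bilinear_br br /\
  (forall x, br x x = 0) /\
  (forall x y z, br x (br y z) + br y (br z x) + br z (br x y) = 0) /\
  (forall x y z t, br (br x y) (br z t) = 0).

Definition lie_subalg (R : pzRingType) (V : lmodType R) (br : V -> V -> V)
    (P : V -> Prop) :=
  P 0 /\ (forall x y, P x -> P y -> P (x + y)) /\
  (forall (c : R) x, P x -> P (c *: x)) /\
  (forall x y, P x -> P y -> P (br x y)).

Definition lie_hom (R : pzRingType) (V W : lmodType R) (brV : V -> V -> V)
    (brW : W -> W -> W) (phi : V -> W) :=
  (forall (c : R) x y, phi (c *: x + y) = c *: phi x + phi y) /\
  (forall x y, phi (brV x y) = brW (phi x) (phi y)).

(* (V, br, a) is (a realization of) M(A;G): the metabelian Lie R-algebra
   presented by generators a_1..a_n and relations [a_p,a_q] = 0 for edges. *)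
Definition is_MAG (R : pzRingType) (n : nat) (e : rel 'I_n) (V : lmodType R)
    (br : V -> V -> V) (a : 'I_n -> V) : Prop :=
  metabelian_lie br /\
  (forall p q, e p q -> br (a p) (a q) = 0) /\
  (forall P : V -> Prop, lie_subalg br P -> (forall i, P (a i)) -> forall x, P x) /\
  (forall (W : lmodType R) (brW : W -> W -> W) (f : 'I_n -> W),
      metabelian_lie brW ->
      (forall p q, e p q -> brW (f p) (f q) = 0) ->
      exists phi : V -> W, lie_hom br brW phi /\ forall i, phi (a i) = f i).

Definition mdeg (n : nat) := {ffun 'I_n -> nat}.
Definition mdeg_add (n : nat) (al be : mdeg n) : mdeg n := [ffun j => al j + be j].
Definition mdeg_unit (n : nat) (i : 'I_n) : mdeg n := [ffun j => nat_of_bool (j == i)].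

(* comp al h = the multi-homogeneous component of h of multi-degree al.
   Axioms: the components give a direct-sum decomposition of V into the
   submodules V_al = {x | comp al x = x}, with a_i of multi-degree e_i and
   [V_al, V_be] in V_(al+be).  (Such a grading exists on M(A;G) and is unique.) *)
Definition multigrading (R : pzRingType) (n : nat) (V : lmodType R)
    (br : V -> V -> V) (a : 'I_n -> V) (comp : mdeg n -> V -> V) : Prop :=
  (forall al (c : R) x y, comp al (c *: x + y) = c *: comp al x + comp al y) /\
  (forall al be x, comp al (comp be x) = if al == be then comp be x else 0) /\
  (forall h, exists s : seq (mdeg n),
      [/\ uniq s, (forall al, al \notin s -> comp al h = 0)
        & h = \sum_(al <- s) comp al h]) /\
  (forall i, comp (mdeg_unit i) (a i) = a i) /\
  (forall al be x y, comp al x = x -> comp be y = y ->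
      comp (mdeg_add al be) (br x y) = br x y).

Definition supp (R : pzRingType) (n : nat) (V : lmodType R)
    (comp : mdeg n -> V -> V) (h : V) (p : 'I_n) : Prop :=
  exists al : mdeg n, comp al h != 0 /\ (al p != 0)%N.

(* omega_1(h): sum of the components of length 1; multi-degrees of length 1
   are exactly the mdeg_unit i *)
Definition omega1 (R : pzRingType) (n : nat) (V : lmodType R)
    (comp : mdeg n -> V -> V) (h : V) : V :=
  \sum_(i < n) comp (mdeg_unit i) h.

Definition lie_direct_sum (R : pzRingType) (V : lmodType R) (br : V -> V -> V)
    (L1 L2 : V -> Prop) : Prop :=
  lie_subalg br L1 /\ lie_subalg br L2 /\
  (forall h, exists x1 x2, [/\ L1 x1, L2 x2 & h = x1 + x2]) /\
  (forall x, L1 x -> L2 x -> x = 0) /\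
  (forall x y, L1 x -> L2 y -> br x y = 0).

From HB Require Import structures.
From mathcomp Require Import all_boot all_order all_algebra zify ring.
Import GRing.Theory.
Local Open Scope ring_scope.

(* Write M^k for the span of the Lie monomials in the a_i of length at least k,
   so that every element is sum_j r_j a_j modulo M^2. For non-adjacent a_k, a_l,
   the metabelian algebra R^n (+) R in which only [a_k, a_l] survives reads off
   both the coefficients r_j and the [a_k, a_l]-coefficient of a bracket. Since
   [a_k + g_k, g_j] = 0 and a_k does not occur in the linear part of g_k,
   comparing [a_k, a_l]-coefficients for a neighbour k of l in the complement
   graph shows that a_l occurs in the linear part of no g_j, so all g_j lie in
   M^2. Then the L_2-component of an element of M^k lies in M^(2k); hence -g_j,
   its own L_2-component, lies in every M^k and vanishes. *)

Set Implicit Arguments. Unset Strict Implicit.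

Lemma morph_add0 (U W : zmodType) (f : U -> W) : {morph f : x y / x + y} -> f 0 = 0.
Proof. by move=> fD; apply: (@addrI _ (f 0)); rewrite -fD !addr0. Qed.

Section Bracket.
Variables (R : pzRingType) (V : lmodType R) (br : V -> V -> V).
Hypothesis br_bilinear : bilinear_br br.

Lemma brDl z : {morph br^~ z : x y / x + y}.
Proof. by move=> x y /=; rewrite -{1}[x]scale1r (proj1 br_bilinear) scale1r. Qed.

Lemma brDr z : {morph br z : x y / x + y}.
Proof. by move=> x y; rewrite -{1}[x]scale1r (proj2 br_bilinear) scale1r. Qed.

Lemma br0l z : br 0 z = 0.
Proof. exact: morph_add0 (brDl z). Qed.

Lemma br0r z : br z 0 = 0.
Proof. exact: morph_add0 (brDr z). Qed.

Lemma br_anti : (forall x, br x x = 0) -> forall x y, br x y = - br y x.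
Proof.
move=> br_alt x y; apply/eqP; rewrite -addr_eq0; apply/eqP.
by have := br_alt (x + y); rewrite brDl !brDr !br_alt add0r addr0.
Qed.

End Bracket.

(* [filtration br a k x]: x lies in M^k. *)
Inductive filtration (R : pzRingType) (n : nat) (V : lmodType R)
    (br : V -> V -> V) (a : 'I_n -> V) : nat -> V -> Prop :=
| filt_gen i k : (k <= 1)%N -> filtration br a k (a i)
| filt_br p q k x y : filtration br a p x -> filtration br a q y ->
    (k <= p + q)%N -> filtration br a k (br x y)
| filt_add k x y : filtration br a k x -> filtration br a k y -> filtration br a k (x + y)
| filt_scale k (c : R) x : filtration br a k x -> filtration br a k (c *: x)
| filt_zero k : filtration br a k 0.

Section Filtration.
Variables (R : pzRingType) (n : nat) (V : lmodType R) (br : V -> V -> V) (a : 'I_n -> V).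

Lemma filtrationW k j x : filtration br a k x -> (j <= k)%N -> filtration br a j x.
Proof.
move=> fx; elim: fx j => {k x}.
- by move=> i k k1 j jk; apply: filt_gen (leq_trans jk k1).
- move=> p q k x y _ IHx _ IHy kpq j jk.
  exact: filt_br (IHx p _) (IHy q _) (leq_trans jk kpq).
- by move=> k x y _ IHx _ IHy j jk; apply: filt_add (IHx j jk) (IHy j jk).
- by move=> k c x _ IHx j jk; apply: filt_scale (IHx j jk).
- by move=> k j _; apply: filt_zero.
Qed.

Hypothesis generated :
  forall P : V -> Prop, lie_subalg br P -> (forall i, P (a i)) -> forall x, P x.

Lemma filtration1 x : filtration br a 1 x.
Proof.
apply: generated => [|i]; last exact: filt_gen.
split; first exact: filt_zero.
split; first by move=> u v; apply: filt_add.
split; first by move=> c u; apply: filt_scale.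
by move=> u v fu fv; apply: filt_br fu fv _.
Qed.

Lemma linear_decomposition x :
  exists (r : 'I_n -> R) (c : V), filtration br a 2 c /\ x = \sum_j r j *: a j + c.
Proof.
elim/generated: x => [|i]; last first.
  exists (fun j => (j == i)%:R), 0; split; first exact: filt_zero.
  rewrite addr0 (bigD1 i) //= eqxx scale1r big1 ?addr0 // => j /negPf ->.
  by rewrite scale0r.
split.
  exists (fun _ => 0), 0; split; first exact: filt_zero.
  by rewrite big1 ?addr0 // => j _; rewrite scale0r.
split.
  move=> _ _ [r [c [c2 ->]]] [r' [c' [c'2 ->]]].
  exists (fun j => r j + r' j), (c + c'); split; first exact: filt_add.
  rewrite addrACA -big_split /=; congr (_ + _); apply: eq_bigr => j _.
  by rewrite scalerDl.
split.
  move=> s _ [r [c [c2 ->]]].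
  exists (fun j => s * r j), (s *: c); split; first exact: filt_scale.
  rewrite scalerDr scaler_sumr; congr (_ + _); apply: eq_bigr => j _.
  by rewrite scalerA.
move=> u v _ _; exists (fun _ => 0), (br u v).
split; first exact: filt_br (filtration1 u) (filtration1 v) _.
by rewrite big1 ?add0r // => j _; rewrite scale0r.
Qed.

End Filtration.

Definition mdeg_size n (al : mdeg n) : nat := (\sum_(j < n) al j)%N.

Lemma mdeg_size_add n (al be : mdeg n) :
  mdeg_size (mdeg_add al be) = (mdeg_size al + mdeg_size be)%N.
Proof. by rewrite /mdeg_size -big_split; apply: eq_bigr => j _; rewrite ffunE. Qed.

Lemma mdeg_size_unit n (i : 'I_n) : mdeg_size (mdeg_unit i) = 1%N.
Proof.
rewrite /mdeg_size (bigD1 i) //= big1 ?ffunE ?eqxx // => j /negPf ji.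
by rewrite ffunE ji.
Qed.

Lemma mdeg_unit_inj n : injective (@mdeg_unit n).
Proof.
move=> i j /(congr1 (fun al : mdeg n => al i)); rewrite !ffunE eqxx.
by case: eqP.
Qed.

Section Grading.
Variables (R : pzRingType) (n : nat) (V : lmodType R) (br : V -> V -> V)
  (a : 'I_n -> V) (comp : mdeg n -> V -> V).
Hypothesis grading : multigrading br a comp.

Lemma compD al : {morph comp al : x y / x + y}.
Proof. by move=> x y; rewrite -{1}[x]scale1r (proj1 grading) scale1r. Qed.

Lemma comp0 al : comp al 0 = 0.
Proof. exact: morph_add0 (compD al). Qed.

Lemma compZ al c x : comp al (c *: x) = c *: comp al x.
Proof. by rewrite -[c *: x]addr0 (proj1 grading) comp0 addr0. Qed.

Lemma comp_sum al I (s : seq I) (P : pred I) (F : I -> V) :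
  comp al (\sum_(i <- s | P i) F i) = \sum_(i <- s | P i) comp al (F i).
Proof. by rewrite (big_morph (comp al) (compD al) (comp0 al)). Qed.

Lemma comp_comp al be x : comp al (comp be x) = if al == be then comp be x else 0.
Proof. by case: grading => _ []. Qed.

Lemma comp_id al x : comp al (comp al x) = comp al x.
Proof. by rewrite comp_comp eqxx. Qed.

Lemma comp_generator al i : comp al (a i) = if al == mdeg_unit i then a i else 0.
Proof. by have [_ [_ [_ [gen_a _]]]] := grading; rewrite -{1}gen_a comp_comp gen_a. Qed.

Lemma comp_eq0 x : (forall al, comp al x = 0) -> x = 0.
Proof.
move=> x0; have [_ [_ [decomp _]]] := grading; have [s [_ _ ->]] := decomp x.
by apply: big1 => al _; apply: x0.
Qed.

Lemma comp_omega1 i h : comp (mdeg_unit i) (omega1 comp h) = comp (mdeg_unit i) h.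
Proof.
rewrite /omega1 comp_sum (bigD1 i) //= comp_id big1 ?addr0 // => j ji.
by rewrite comp_comp (inj_eq (@mdeg_unit_inj n)) eq_sym (negPf ji).
Qed.

Lemma comp_unit_eq0 i h : ~ supp comp (omega1 comp h) i -> comp (mdeg_unit i) h = 0.
Proof.
move=> nsupp; have [//|nz] := eqVneq (comp (mdeg_unit i) h) 0.
by case: nsupp; exists (mdeg_unit i); rewrite comp_omega1 ffunE eqxx.
Qed.

Hypothesis br_bilinear : bilinear_br br.

Lemma comp_br_eq0 al x y :
  (forall be ga, mdeg_add be ga = al -> br (comp be x) (comp ga y) = 0) ->
  comp al (br x y) = 0.
Proof.
move=> homog0; have [_ [_ [decomp [_ br_homog]]]] := grading.
have [s [_ _ ->]] := decomp x; have [t [_ _ ->]] := decomp y.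
rewrite (big_morph _ (brDl br_bilinear _) (br0l br_bilinear _)) comp_sum.
apply: big1 => be _.
rewrite (big_morph _ (brDr br_bilinear _) (br0r br_bilinear _)) comp_sum.
apply: big1 => ga _.
have br_be_ga := br_homog be ga _ _ (comp_id be x) (comp_id ga y).
by rewrite -br_be_ga comp_comp; case: eqP => // al_be_ga; rewrite br_be_ga homog0.
Qed.

Lemma comp_filtration k x al :
  filtration br a k x -> (mdeg_size al < k)%N -> comp al x = 0.
Proof.
move=> fx; elim: fx al => {k x}.
- move=> i k k1 al; rewrite comp_generator; case: eqP => // ->.
  by rewrite mdeg_size_unit; case: k k1 => [|[]].
- move=> p q k x y _ IHx _ IHy kpq al al_k; apply: comp_br_eq0 => be ga al_be_ga.
  have [be_p|p_be] := ltnP (mdeg_size be) p; first by rewrite IHx ?br0l.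
  rewrite IHy ?br0r //; move: al_k; rewrite -al_be_ga mdeg_size_add; lia.
- by move=> k x y _ IHx _ IHy al al_k; rewrite compD IHx ?IHy ?addr0.
- by move=> k c x _ IHx al al_k; rewrite compZ IHx ?scaler0.
- by move=> k al _; rewrite comp0.
Qed.

Lemma filtration_eq0 x : (forall k, filtration br a k x) -> x = 0.
Proof. by move=> fx; apply: comp_eq0 => al; apply: comp_filtration (fx _) _. Qed.

Lemma comp_unit_linear k (r : 'I_n -> R) c : filtration br a 2 c ->
  comp (mdeg_unit k) (\sum_j r j *: a j + c) = r k *: a k.
Proof.
move=> c2; rewrite compD (comp_filtration c2) ?mdeg_size_unit // addr0.
rewrite comp_sum (bigD1 k) //= compZ comp_generator eqxx big1 ?addr0 // => j jk.
by rewrite compZ comp_generator (inj_eq (@mdeg_unit_inj n)) eq_sym (negPf jk) scaler0.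
Qed.

End Grading.

Section LieHom.
Variables (R : pzRingType) (V W : lmodType R) (brV : V -> V -> V) (brW : W -> W -> W)
  (phi : V -> W).
Hypothesis phi_hom : lie_hom brV brW phi.

Lemma lie_homD : {morph phi : x y / x + y}.
Proof. by move=> x y; rewrite -{1}[x]scale1r (proj1 phi_hom) scale1r. Qed.

Lemma lie_hom0 : phi 0 = 0.
Proof. exact: morph_add0 lie_homD. Qed.

Lemma lie_homZ c x : phi (c *: x) = c *: phi x.
Proof. by rewrite -[c *: x]addr0 (proj1 phi_hom) lie_hom0 addr0. Qed.

Lemma lie_homN x : phi (- x) = - phi x.
Proof. by rewrite -scaleN1r lie_homZ scaleN1r. Qed.

Lemma lie_hom_sum I (s : seq I) (P : pred I) (F : I -> V) :
  phi (\sum_(i <- s | P i) F i) = \sum_(i <- s | P i) phi (F i).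
Proof. by rewrite (big_morph phi lie_homD lie_hom0). Qed.

Lemma lie_hom_br x y : phi (brV x y) = brW (phi x) (phi y).
Proof. exact: (proj2 phi_hom). Qed.

End LieHom.

Section PairModel.
Variables (R : comPzRingType) (n : nat) (k l : 'I_n).

Definition pair_alg : Type := ('rV[R]_n * 'rV[R]_1)%type.

Definition pair_br (u v : pair_alg) : pair_alg :=
  (0, const_mx (u.1 0 k * v.1 0 l - u.1 0 l * v.1 0 k)).

Lemma pair_br_metabelian : metabelian_lie pair_br.
Proof.
split; [split | split; [| split]] => *; rewrite /pair_br /=; congr (_, _);
  rewrite ?scaler0 ?addr0 //; apply/matrixP => i j; rewrite !mxE; ring.
Qed.

End PairModel.

Section PairHom.
Variables (R : comPzRingType) (n : nat) (e : rel 'I_n) (V : lmodType R)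
  (br : V -> V -> V) (a : 'I_n -> V).

Lemma MAG_pair_hom k l : is_MAG e br a -> ~~ e k l -> ~~ e l k ->
  exists psi : V -> pair_alg R n,
    lie_hom br (pair_br k l) psi /\ forall i, psi (a i) = (delta_mx 0 i, 0).
Proof.
move=> [_ [_ [_ universal]]] nkl nlk.
apply: universal => [|p q epq]; first exact: pair_br_metabelian.
have nkl' : ~~ ((k == p) && (l == q)).
  by apply/andP => -[/eqP kp /eqP lq]; rewrite kp lq epq in nkl.
have nlk' : ~~ ((l == p) && (k == q)).
  by apply/andP => -[/eqP lp /eqP kq]; rewrite lp kq epq in nlk.
rewrite /pair_br /=; congr (_, _); apply/matrixP => i j; rewrite !mxE /=.
by rewrite -!natrM !mulnb (negPf nkl') (negPf nlk') subrr.
Qed.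

Lemma scale_generator_eq0 k (r : R) : is_MAG e br a -> ~~ e k k -> r *: a k = 0 -> r = 0.
Proof.
move=> MAG nkk rak0; have [psi [psi_hom psi_a]] := MAG_pair_hom MAG nkk nkk.
have := congr1 (fun x => (psi x).1 0 k) rak0.
by rewrite (lie_homZ psi_hom) psi_a (lie_hom0 psi_hom) /= !mxE !eqxx mulr1.
Qed.

Variables (k l : 'I_n) (psi : V -> pair_alg R n).
Hypotheses (psi_hom : lie_hom br (pair_br k l) psi)
  (psi_a : forall i, psi (a i) = (delta_mx 0 i, 0)).

Lemma pair_hom_filtration2 m c : filtration br a m c -> (2 <= m)%N -> (psi c).1 = 0.
Proof.
elim=> {m c}.
- by move=> i m m1 m2; have := leq_trans m2 m1.
- by move=> p q m x y *; rewrite (lie_hom_br psi_hom).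
- by move=> m x y _ IHx _ IHy m2; rewrite (lie_homD psi_hom) /= IHx ?IHy ?addr0.
- by move=> m c x _ IHx m2; rewrite (lie_homZ psi_hom) /= IHx ?scaler0.
- by move=> m _; rewrite (lie_hom0 psi_hom).
Qed.

Lemma pair_hom_linear (r : 'I_n -> R) c j :
  filtration br a 2 c -> (psi (\sum_i r i *: a i + c)).1 0 j = r j.
Proof.
move=> c2; rewrite (lie_homD psi_hom) /= (pair_hom_filtration2 c2) // addr0.
rewrite (lie_hom_sum psi_hom) raddf_sum summxE (bigD1 j) //= big1 => [|i ij];
  rewrite (lie_homZ psi_hom) psi_a /= !mxE.
  by rewrite !eqxx mulr1 addr0.
by rewrite eq_sym (negPf ij) mulr0.
Qed.

Lemma pair_hom_br x y :
  (psi (br x y)).2 0 0 = (psi x).1 0 k * (psi y).1 0 l - (psi x).1 0 l * (psi y).1 0 k.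
Proof. by rewrite (lie_hom_br psi_hom) /= mxE. Qed.

End PairHom.

Lemma compl_connected_neighbour n (e : rel 'I_n) :
  (2 <= n)%N -> compl_connected e -> forall l, exists k, compl_graph e l k.
Proof.
move=> n2 conn l.
have [k lk] : exists k : 'I_n, l != k.
  pose k0 := Ordinal (ltnW n2); pose k1 := Ordinal n2.
  by have [->|] := eqVneq l k0; [exists k1 | exists k0].
case/connectP: (conn l k) => -[/= _ lk_eq|k' p /= /andP [lk' _] _]; last by exists k'.
by rewrite -lk_eq eqxx in lk.
Qed.

Section DirectSum.
Variables (R : pzRingType) (V : lmodType R) (br : V -> V -> V) (L1 L2 : V -> Prop).
Hypotheses (br_bilinear : bilinear_br br) (br_alt : forall x, br x x = 0).
Hypothesis dsum : lie_direct_sum br L1 L2.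

Lemma direct_sum_br u v x y : L1 u -> L1 v -> L2 x -> L2 y ->
  br (u + x) (v + y) = br u v + br x y.
Proof.
have [_ [_ [_ [_ br12]]]] := dsum => L1u L1v L2x L2y.
rewrite (brDl br_bilinear) !(brDr br_bilinear) (br12 _ _ L1u L2y).
by rewrite (br_anti br_bilinear br_alt x v) (br12 _ _ L1v L2x) oppr0 addr0 add0r.
Qed.

Lemma direct_sum_L2_eq x y : L2 x -> L2 y -> L1 (x - y) -> x = y.
Proof.
have [_ [[_ [L2D [L2Z _]]] [_ [disj _]]]] := dsum => L2x L2y L1xy.
apply/eqP; rewrite -subr_eq0; apply/eqP; apply: disj L1xy _.
by rewrite -scaleN1r; apply: L2D L2x (L2Z _ _ L2y).
Qed.

End DirectSum.

Section Projection.
Variables (R : pzRingType) (n : nat) (V : lmodType R) (br : V -> V -> V)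
  (a : 'I_n -> V) (L1 L2 : V -> Prop) (g : 'I_n -> V).
Hypotheses (br_bilinear : bilinear_br br) (br_alt : forall x, br x x = 0).
Hypothesis dsum : lie_direct_sum br L1 L2.
Hypothesis g_split : forall i, L1 (a i + g i) /\ L2 (- g i).
Hypothesis g_filtration2 : forall i, filtration br a 2 (g i).

Lemma L2_component_filtration k x : filtration br a k x ->
  exists2 x2, L2 x2 & L1 (x - x2) /\ filtration br a (k + k) x2.
Proof.
have [[L10 [L1D [L1Z L1br]]] [[L20 [L2D [L2Z L2br]]] _]] := dsum.
elim=> {k x}.
- move=> i k k1; have [L1i L2i] := g_split i.
  exists (- g i) => //; split; first by rewrite opprK.
  rewrite -scaleN1r; apply: filt_scale (filtrationW (g_filtration2 i) _).
  by case: k k1 => [|[]].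
- move=> p q k x y _ [x2 L2x2 [L1x fx2]] _ [y2 L2y2 [L1y fy2]] kpq.
  exists (br x2 y2); first exact: L2br.
  split; last by apply: filt_br fx2 fy2 _; rewrite addnACA leq_add.
  rewrite -{1}(subrK x2 x) -{1}(subrK y2 y).
  by rewrite (direct_sum_br br_bilinear br_alt dsum) // addrK; apply: L1br.
- move=> k x y _ [x2 L2x2 [L1x fx2]] _ [y2 L2y2 [L1y fy2]].
  exists (x2 + y2); first exact: L2D.
  by split; [rewrite opprD addrACA; apply: L1D | apply: filt_add].
- move=> k c x _ [x2 L2x2 [L1x fx2]].
  exists (c *: x2); first exact: L2Z.
  by split; [rewrite -scalerBr; apply: L1Z | apply: filt_scale].
- by move=> k; exists 0 => //; split; [rewrite subr0 | apply: filt_zero].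
Qed.

Lemma L2_filtration_double k x : L2 x -> filtration br a k x -> filtration br a (k + k) x.
Proof.
move=> L2x /L2_component_filtration [x2 L2x2 [L1x fx2]].
by rewrite (direct_sum_L2_eq dsum L2x L2x2 L1x).
Qed.

Lemma L2_filtration2_all x : L2 x -> filtration br a 2 x -> forall m, filtration br a m x.
Proof.
move=> L2x fx; have fxS m : filtration br a m.+2 x.
  elim: m => // m IH; apply: filtrationW (L2_filtration_double L2x IH) _; lia.
by move=> m; apply: filtrationW (fxS m) _; lia.
Qed.

End Projection.

Section LinearParts.
Variables (R : comPzRingType) (n : nat) (e : rel 'I_n) (V : lmodType R)
  (br : V -> V -> V) (a : 'I_n -> V) (comp : mdeg n -> V -> V)
  (L1 L2 : V -> Prop) (g : 'I_n -> V).
Hypotheses (loopless : forall i, ~~ e i i) (e_sym : forall i j, e i j = e j i).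
Hypotheses (MAG : is_MAG e br a) (grading : multigrading br a comp).
Hypothesis dsum : lie_direct_sum br L1 L2.
Hypothesis g_split :
  forall i, [/\ L1 (a i + g i), L2 (- g i) & ~ supp comp (omega1 comp (g i)) i].

Let br_bilinear : bilinear_br br := MAG.1.1.
Let generated := MAG.2.2.1.

Lemma linear_coeff_self k r c :
  filtration br a 2 c -> g k = \sum_j r j *: a j + c -> r k = 0.
Proof.
move=> c2 gk; apply: (scale_generator_eq0 MAG (loopless k)).
rewrite -(comp_unit_linear grading br_bilinear k r c2) -gk.
by apply: (comp_unit_eq0 grading); case: (g_split k).
Qed.

(* Compare the [a_k, a_l]-coefficients in [a_k + g_k, -g_j] = 0. *)
Lemma linear_coeff_relation k l j rk ck rj cj : compl_graph e l k ->
  filtration br a 2 ck -> g k = \sum_i rk i *: a i + ck ->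
  filtration br a 2 cj -> g j = \sum_i rj i *: a i + cj ->
  rj l = rk l * rj k.
Proof.
move=> /andP [lk nlk] ck2 gk cj2 gj.
have nkl : ~~ e k l by rewrite e_sym.
have [psi [psi_hom psi_a]] := MAG_pair_hom MAG nkl nlk.
have coeff_gk m : (psi (g k)).1 0 m = rk m.
  by rewrite gk (pair_hom_linear psi_hom psi_a _ _ ck2).
have coeff_gj m : (psi (g j)).1 0 m = rj m.
  by rewrite gj (pair_hom_linear psi_hom psi_a _ _ cj2).
have [L1k _ _] := g_split k; have [_ L2j _] := g_split j.
have [_ [_ [_ [_ br12]]]] := dsum.
have := congr1 (fun x => (psi x).2 0 0) (br12 _ _ L1k L2j).
rewrite /= (pair_hom_br psi_hom) (lie_hom0 psi_hom) (lie_homD psi_hom) (lie_homN psi_hom).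
rewrite psi_a /= !mxE !coeff_gk !coeff_gj (linear_coeff_self ck2 gk) !eqxx (negPf lk).
by move=> /= rel; apply/eqP; rewrite -subr_eq0 -oppr_eq0 -rel; apply/eqP; ring.
Qed.

Lemma g_filtration2 : (forall l, exists k, compl_graph e l k) ->
  forall j, filtration br a 2 (g j).
Proof.
move=> neighbour j; have [rj [cj [cj2 gj]]] := linear_decomposition generated (g j).
suff rj0 l : rj l = 0 by rewrite gj big1 ?add0r // => l _; rewrite rj0 scale0r.
have [k lk] := neighbour l.
have [rk [ck [ck2 gk]]] := linear_decomposition generated (g k).
have rkl : rk l = 0.
  by rewrite (linear_coeff_relation lk ck2 gk ck2 gk) (linear_coeff_self ck2 gk) mulr0.
by rewrite (linear_coeff_relation lk ck2 gk cj2 gj) rkl mul0r.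
Qed.

End LinearParts.

Unset Implicit Arguments.

Theorem lemma6 (R : idomainType) (n : nat) (e : rel 'I_n)
    (V : lmodType R) (br : V -> V -> V) (a : 'I_n -> V)
    (comp : mdeg n -> V -> V) (L1 L2 : V -> Prop) (g : 'I_n -> V) :
  (2 <= n)%N ->
  simple_graph e ->
  compl_connected e ->
  is_MAG e br a ->
  multigrading br a comp ->
  lie_direct_sum br L1 L2 ->
  (* (a_i)_1 = a_i + g_i and (a_i)_2 = - g_i, with a_i not in supp(omega_1(g_i)) *)
  (forall i, [/\ L1 (a i + g i), L2 (- g i) & ~ supp comp (omega1 comp (g i)) i]) ->
  forall i, g i = 0.
Proof.
move=> n2 [loopless e_sym] conn MAG grading dsum g_split.
have [[br_bilinear [br_alt _]] _] := MAG.
have g2 := g_filtration2 loopless e_sym MAG grading dsum g_split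
  (compl_connected_neighbour n2 conn).
have g_split12 i : L1 (a i + g i) /\ L2 (- g i) by case: (g_split i).
move=> i; apply/eqP; rewrite -oppr_eq0; apply/eqP.
apply: (filtration_eq0 grading br_bilinear) => m.
have [_ L2i _] := g_split i.
apply: (L2_filtration2_all br_bilinear br_alt dsum g_split12 g2 L2i).
by rewrite -scaleN1r; apply: filt_scale.
Qed.
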